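(* Let $S$ be a memory system satisfying the Causality assumption, let $n,m,v\ge1$, let $\Omega$ be a witness for $S(n,m,v)$, and let $\tau$ be an unambiguous trace of $S(n,m,v)$. If the graph $G(\Omega)(\tau)$ has a (directed) cycle, then it has a $k$-nice cycle for some $k$ with $1\le k\le\min\{n,m\}$.
   Context: Notation: $\mathbb{N}_n=\{1,\dots,n\}$, $\mathbb{W}_n=\{0,\dots,n\}$. Memory events $E(n,m,v)=\{R,W\}\times\mathbb{N}_n\times\mathbb{N}_m\times\mathbb{W}_v$; for $e=\langle a,b,c,d\rangle$, $op(e)=a$, $proc(e)=b$, $loc(e)=c$, $data(e)=d$; $0$ models the initial value of every location. A memory system is a family $S=(S(n,m,v))_{n,m,v\ge1}$, $S(n,m,v)$ a regular set of finite runs over an alphabet $E^a(n,m,v)\supseteq E(n,m,v)$ (other letters are internal events). The trace of a run is its subsequence of memory events; traces of $S(n,m,v)$ are traces of its runs. For a sequence $\tau$ of memory events with positions $1,\dots,|\tau|$: $P(\tau,i)=\{k: proc(\tau(k))=i\}$, $L(\tau,j)=\{k: loc(\tau(k))=j\}$, $L^w(\tau,j)=\{k\in L(\tau,j): op(\tau(k))=W\}$, $L^r(\tau,j)=\{k\in L(\tau,j): op(\tau(k))=R\}$. A trace $\tau$ is unambiguous if for every location $j$ and $x\in L^w(\tau,j)$, $data(\tau(x))\ne0$ and $data(\tau(x))\ne data(\tau(y))$ for all $y\in L^w(\tau,j)\setminus\{x\}$. Causality assumption: for all $n,m,v\ge1$, every trace $\tau$ of $S(n,m,v)$, every location $j$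 and every $x\in L^r(\tau,j)$, either $data(\tau(x))=0$ or there is $y\in L^w(\tau,j)$ with $data(\tau(x))=data(\tau(y))$. $M(\tau,i)=\{\langle u,v\rangle: u,v\in P(\tau,i), u<v\}$. A witness $\Omega$ for $S(n,m,v)$ assigns to every trace $\tau$ of $S(n,m,v)$ and location $j$ a strict total order $\Omega(\tau,j)$ on $L^w(\tau,j)$. For unambiguous $\tau$, $\Omega^e(\tau,j)\subseteq L(\tau,j)^2$: $\langle x,y\rangle\in\Omega^e(\tau,j)$ iff (1) $data(\tau(x))=data(\tau(y))$, $op(\tau(x))=W$, $op(\tau(y))=R$; or (2) $data(\tau(x))=0$ and $data(\tau(y))\ne0$; or (3) there are $a,b\in L^w(\tau,j)$ with $\langle a,b\rangle\in\Omega(\tau,j)$, $data(\tau(a))=data(\tau(x))$, $data(\tau(b))=data(\tau(y))$. $G(\Omega)(\tau)$ is the directed graph on $\{1,\dots,|\tau|\}$ with edge set $\bigcup_{1\le i\le n}M(\tau,i)\cup\bigcup_{1\le j\le m}\Omega^e(\tau,j)$. For $k\ge1$ let $\oplus$ denote addition in the cyclic group on $\mathbb{N}_k$ with identity $k$ (so $x\oplus1=x+1$ for $x<k$ and $k\oplus1=1$). A $k$-nice cycle in $G(\Omega)(\tau)$ is a sequence $u_1,v_1,\dots,u_k,v_k$ of pairwise distinct vertices such that: (i) for every $1\le x\le k$, $\langle u_x,v_x\rangle\in M(\tau,i)$ for some processor $i$ and $\langle v_x,u_{x\oplus1}\rangle\in\Omega^e(\tau,j)$ for some location $j$; (ii)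 for $1\le x<y\le k$, if $\langle u_x,v_x\rangle\in M(\tau,i)$ and $\langle u_y,v_y\rangle\in M(\tau,i')$ then $i\ne i'$; (iii) for $1\le x<y\le k$, if $\langle v_x,u_{x\oplus1}\rangle\in\Omega^e(\tau,j)$ and $\langle v_y,u_{y\oplus1}\rangle\in\Omega^e(\tau,j')$ then $j\ne j'$. *)

From mathcomp Require Import all_boot.
Set Implicit Arguments. Unset Strict Implicit. Unset Printing Implicit Defensive.

Inductive op_t := OpR | OpW.

(* e = <op, proc, loc, data>; processors/locations are 1-based nats,
   data 0 is the initial value. *)
Record mevent := MEv { op : op_t; proc : nat; loc : nat; data : nat }.

Definition in_E (n m v : nat) (e : mevent) : Prop :=
  1 <= proc e <= n /\ 1 <= loc e <= m /\ data e <= v.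

Inductive letter (I : Type) := Mem of mevent | Int of I.

Definition trace_of_run (I : Type) (r : seq (letter I)) : seq mevent :=
  pmap (fun l => match l with Mem e => Some e | Int _ => None end) r.

Definition regular (A : Type) (Lang : seq A -> Prop) : Prop :=
  exists (Q : finType) (q0 : Q) (d : Q -> A -> Q) (F : pred Q),
    forall r, Lang r <-> F (foldl d q0 r).

Record memsys := MemSys {
  ilet : nat -> nat -> nat -> finType;
  runs : forall n m v, seq (letter (ilet n m v)) -> Prop;
  runs_alphabet : forall n m v (r : seq (letter (ilet n m v))), runs r ->
     forall k, k < size (trace_of_run r) ->
       in_E n m v (nth (MEv OpR 0 0 0) (trace_of_run r) k);
  runs_regular : forall n m v, 1 <= n -> 1 <= m -> 1 <= v ->
     regular (@runs n m v)
}.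

Definition is_trace (S : memsys) (n m v : nat) (tau : seq mevent) : Prop :=
  exists r : seq (letter (ilet S n m v)), @runs S n m v r /\ trace_of_run r = tau.

Definition dflt_ev : mevent := MEv OpR 0 0 0.
Definition at_ (tau : seq mevent) (k : nat) : mevent := nth dflt_ev tau k.-1.
Definition is_pos (tau : seq mevent) (k : nat) : Prop := 1 <= k <= size tau.

Definition Pset (tau : seq mevent) (i k : nat) : Prop :=
  is_pos tau k /\ proc (at_ tau k) = i.
Definition Lset (tau : seq mevent) (j k : nat) : Prop :=
  is_pos tau k /\ loc (at_ tau k) = j.
Definition Lw (tau : seq mevent) (j k : nat) : Prop :=
  Lset tau j k /\ op (at_ tau k) = OpW.
Definition Lr (tau : seq mevent) (j k : nat) : Prop :=
  Lset tau j k /\ op (at_ tau k) = OpR.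

Definition unambiguous (tau : seq mevent) : Prop :=
  forall j x, Lw tau j x ->
    data (at_ tau x) <> 0 /\
    forall y, Lw tau j y -> y <> x -> data (at_ tau x) <> data (at_ tau y).

Definition causality (S : memsys) : Prop :=
  forall n m v, 1 <= n -> 1 <= m -> 1 <= v ->
  forall tau, is_trace S n m v tau ->
  forall j x, Lr tau j x ->
    data (at_ tau x) = 0 \/
    exists y, Lw tau j y /\ data (at_ tau x) = data (at_ tau y).

Definition M (tau : seq mevent) (i u w : nat) : Prop :=
  Pset tau i u /\ Pset tau i w /\ u < w.

Definition witness_t := seq mevent -> nat -> nat -> nat -> Prop.

Definition strict_total_on (A : nat -> Prop) (rel : nat -> nat -> Prop) : Prop :=
  (forall x y, rel x y -> A x /\ A y) /\
  (forall x, ~ rel x x) /\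
  (forall x y z, rel x y -> rel y z -> rel x z) /\
  (forall x y, A x -> A y -> x <> y -> rel x y \/ rel y x).

Definition is_witness (S : memsys) (n m v : nat) (Om : witness_t) : Prop :=
  forall tau, is_trace S n m v tau ->
  forall j, 1 <= j <= m -> strict_total_on (Lw tau j) (Om tau j).

Definition Omega_e (Om : witness_t) (tau : seq mevent) (j x y : nat) : Prop :=
  Lset tau j x /\ Lset tau j y /\
  ( (data (at_ tau x) = data (at_ tau y) /\ op (at_ tau x) = OpW
       /\ op (at_ tau y) = OpR)
  \/ (data (at_ tau x) = 0 /\ data (at_ tau y) <> 0)
  \/ (exists a b, Lw tau j a /\ Lw tau j b /\ Om tau j a b /\
        data (at_ tau a) = data (at_ tau x) /\
        data (at_ tau b) = data (at_ tau y)) ).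

Definition Gedge (n m : nat) (Om : witness_t) (tau : seq mevent) (x y : nat) : Prop :=
  (exists i, 1 <= i <= n /\ M tau i x y) \/
  (exists j, 1 <= j <= m /\ Omega_e Om tau j x y).

Definition has_cycle (n m : nat) (Om : witness_t) (tau : seq mevent) : Prop :=
  exists (l : nat) (w : nat -> nat), 1 <= l /\
    (forall t, t < l -> is_pos tau (w t)) /\
    (forall t s, t < l -> s < l -> w t = w s -> t = s) /\
    (forall t, t < l -> Gedge n m Om tau (w t) (w (t.+1 %% l))).

Definition csucc (k x : nat) : nat := if x < k then x.+1 else 1.

Definition nice_cycle (n m : nat) (Om : witness_t) (tau : seq mevent) (k : nat)
    (u w : nat -> nat) : Prop :=
  (forall x y, 1 <= x <= k -> 1 <= y <= k -> u x = u y -> x = y) /\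
  (forall x y, 1 <= x <= k -> 1 <= y <= k -> w x = w y -> x = y) /\
  (forall x y, 1 <= x <= k -> 1 <= y <= k -> u x <> w y) /\
  (forall x, 1 <= x <= k -> is_pos tau (u x) /\ is_pos tau (w x)) /\
  (forall x, 1 <= x <= k ->
     (exists i, 1 <= i <= n /\ M tau i (u x) (w x)) /\
     (exists j, 1 <= j <= m /\ Omega_e Om tau j (w x) (u (csucc k x)))) /\
  (forall x y, 1 <= x -> x < y -> y <= k -> forall i i',
     1 <= i <= n -> 1 <= i' <= n ->
     M tau i (u x) (w x) -> M tau i' (u y) (w y) -> i <> i') /\
  (forall x y, 1 <= x -> x < y -> y <= k -> forall j j',
     1 <= j <= m -> 1 <= j' <= m ->
     Omega_e Om tau j (w x) (u (csucc k x)) ->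
     Omega_e Om tau j' (w y) (u (csucc k y)) -> j <> j').

Definition has_nice_cycle (n m : nat) (Om : witness_t) (tau : seq mevent) (k : nat) : Prop :=
  exists u w : nat -> nat, nice_cycle n m Om tau k u w.

From mathcomp Require Import all_boot zify.
From Stdlib Require Import Classical.

Set Implicit Arguments. Unset Strict Implicit. Unset Printing Implicit Defensive.

(* Take a cycle of G(Omega)(tau) without chords.  Program order M(tau, i) is
   transitive, and by causality and unambiguity each Omega^e(tau, j) is a
   strict weak order on L(tau, j) (irreflexive, transitive and negatively
   transitive).  Transitivity forbids two consecutive edges of the same
   processor or location, so the edges of a chordless cycle alternate between
   program-order edges and Omega^e edges, and its length is even, say 2k.
   Two of its program-order edges of one processor, or two of its Omega^e
   edges of one location, would yield a chord ("p < q and r < s imply p < s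
   or r < q" holds in both kinds of orders), so processors and locations
   along the cycle are pairwise distinct, whence k <= n and k <= m. *)

Lemma eq_mod_window L b t s :
  b <= t < b + L -> b <= s < b + L -> t %% L = s %% L -> t = s.
Proof.
wlog le_ts : t s / t <= s.
  move=> H ht hs e; case: (leqP t s) => [le_ts | lt_st]; first exact: H.
  by apply/esym/H => //; apply: ltnW.
move=> /andP[bt tL] /andP[bs sL] e.
have : L %| s - t by rewrite -eqn_mod_dvd // e.
case: (posnP (s - t)) => [st0 | st_gt0]; first lia.
move/(dvdn_leq st_gt0); lia.
Qed.

Lemma leq_of_inj_in_range k N (f : nat -> nat) :
  (forall x, 1 <= x <= k -> 1 <= f x <= N) ->
  (forall x y, 1 <= x <= k -> 1 <= y <= k -> f x = f y -> x = y) -> k <= N.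
Proof.
move=> f_range f_inj.
suff : size (map f (iota 1 k)) <= size (iota 1 N) by rewrite size_map !size_iota.
apply: uniq_leq_size.
  rewrite map_inj_in_uniq ?iota_uniq // => x y.
  by rewrite !mem_iota => hx hy; apply: f_inj; lia.
move=> y /mapP[x]; rewrite !mem_iota => hx ->.
have := f_range x; lia.
Qed.

Section ChordlessCycles.
Variables (P : nat -> Prop) (E : nat -> nat -> Prop).

(* A cycle of length l, unrolled into an l-periodic sequence of vertices. *)
Definition periodic_cycle l (W : nat -> nat) : Prop :=
  [/\ 1 <= l, forall t, P (W t), forall t, W (t + l) = W t,
      forall b t s, b <= t < b + l -> b <= s < b + l -> W t = W s -> t = s
    & forall t, E (W t) (W t.+1)].

Definition chordless l (W : nat -> nat) : Prop :=
  forall a c, a.+2 <= c -> c <= a + l -> ~ E (W a) (W c).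

Lemma periodic_cycle_of_cycle L f :
  0 < L -> (forall t, t < L -> P (f t)) ->
  (forall t s, t < L -> s < L -> f t = f s -> t = s) ->
  (forall t, t < L -> E (f t) (f (t.+1 %% L))) ->
  periodic_cycle L (fun t => f (t %% L)).
Proof.
move=> L_gt0 f_P f_inj f_E; split=> // [t | t | b t s ht hs /= e | t /=].
- by apply: f_P; rewrite ltn_pmod.
- by rewrite /= modnDr.
- by apply: (eq_mod_window ht hs); apply: f_inj; rewrite ?ltn_pmod.
- rewrite -[t.+1]addn1 -modnDml addn1.
  by apply: f_E; rewrite ltn_pmod.
Qed.

Lemma periodic_cycle_shortcut l W a c :
  periodic_cycle l W -> a.+2 <= c -> c <= a + l -> E (W a) (W c) ->
  periodic_cycle (a + l - c).+1 (fun t => W (c + t %% (a + l - c).+1)).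
Proof.
move=> [l_gt0 W_P W_per W_inj W_E] ac cl Eac.
apply: (periodic_cycle_of_cycle (f := fun t => W (c + t))) => // t.
- move=> s ht hs e.
  suff : c + t = c + s by lia.
  by apply: (W_inj c) e; lia.
- move=> ht; case: (ltnP t.+1 (a + l - c).+1) => [lt_t | le_t].
    by rewrite modn_small // addnS.
  have -> : t = a + l - c by lia.
  by rewrite modnn addn0 subnKC ?W_per // leq_addr.
Qed.

(* Repeatedly shortcutting along a chord strictly shortens the cycle. *)
Lemma exists_chordless_cycle l W :
  periodic_cycle l W -> exists l' W', periodic_cycle l' W' /\ chordless l' W'.
Proof.
elim/ltn_ind: l W => l IH W Hcyc.
case: (classic (exists a c, [/\ a.+2 <= c, c <= a + l & E (W a) (W c)])).
  move=> [a [c [ac cl Eac]]].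
  by apply: IH (periodic_cycle_shortcut Hcyc ac cl Eac); lia.
move=> no_chord; exists l, W; split=> // a c ac cl Eac.
by apply: no_chord; exists a, c.
Qed.

End ChordlessCycles.

Lemma M_trans tau i i' x y z : M tau i x y -> M tau i' y z -> M tau i x z.
Proof.
move=> [Px [[_ py] xy]] [[_ py'] [[z_pos pz] yz]].
by split=> //; split; [split=> //; rewrite pz -py' py | apply: ltn_trans yz].
Qed.

Lemma M_cross tau i p q r s :
  M tau i p q -> M tau i r s -> M tau i p s \/ M tau i r q.
Proof.
move=> [Pp [Pq pq]] [Pr [Ps rs]].
by case: (ltnP p s) => [ps | sp]; [left | right; do 2 split=> //; lia].
Qed.

Section WitnessOrder.
Variables (m : nat) (Om : witness_t) (tau : seq mevent).
Hypothesis Hun : unambiguous tau.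
Hypothesis Hcaus : forall j x, Lr tau j x ->
  data (at_ tau x) = 0 \/
  exists y, Lw tau j y /\ data (at_ tau x) = data (at_ tau y).
Hypothesis Hwit : forall j, 1 <= j <= m -> strict_total_on (Lw tau j) (Om tau j).

Local Notation dat x := (data (at_ tau x)).
Local Notation Oe := (Omega_e Om tau).

Lemma write_data_neq0 j a : Lw tau j a -> dat a <> 0.
Proof. by case/Hun. Qed.

Lemma write_data_inj j a b : Lw tau j a -> Lw tau j b -> dat a = dat b -> a = b.
Proof.
move=> Ha Hb e; case: (PeanoNat.Nat.eq_dec a b) => // ne.
by case: ((Hun Ha).2 b Hb (nesym ne)).
Qed.

Lemma data_initial_or_written j x :
  Lset tau j x -> dat x = 0 \/ exists a, Lw tau j a /\ dat a = dat x.
Proof.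
move=> Lx; case ox: (op (at_ tau x)); last by right; exists x.
case: (Hcaus (conj Lx ox)) => [-> | [y [Ly e]]]; first by left.
by right; exists y.
Qed.

Lemma Omega_e_read_from j x y : Lset tau j x -> Lset tau j y -> dat x = dat y ->
  op (at_ tau x) = OpW -> op (at_ tau y) = OpR -> Oe j x y.
Proof. by move=> *; do 2 split=> //; left. Qed.

Lemma Omega_e_from_initial j x y :
  Lset tau j x -> Lset tau j y -> dat x = 0 -> dat y <> 0 -> Oe j x y.
Proof. by move=> *; do 2 split=> //; right; left. Qed.

Lemma Omega_e_of_order j x y a b : Lset tau j x -> Lset tau j y ->
  Lw tau j a -> Lw tau j b -> Om tau j a b -> dat a = dat x -> dat b = dat y ->
  Oe j x y.
Proof. by move=> *; do 2 split=> //; right; right; exists a, b. Qed.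

Lemma Omega_e_target_neq0 j x y : Oe j x y -> dat y <> 0.
Proof.
move=> [Lx [_ [[exy [ox _]] | [[_ nz_y] | [a [b [_ [Lb [_ [_ <-]]]]]]]]]] //.
- by rewrite -exy; apply: write_data_neq0 (conj Lx ox).
- exact: write_data_neq0 Lb.
Qed.

Lemma Omega_e_irrefl j x : 1 <= j <= m -> ~ Oe j x x.
Proof.
move=> hj [_ [_ [[_ [-> //]] | [[-> //] | [a [b [La [Lb [ab [ea eb]]]]]]]]]].
have [_ [irr _]] := Hwit hj.
by apply: (irr a); rewrite {2}(write_data_inj La Lb (etrans ea (esym eb))).
Qed.

Lemma Omega_e_trans j x y z : 1 <= j <= m -> Oe j x y -> Oe j y z -> Oe j x z.
Proof.
move=> hj Hxy Hyz; have [_ [_ [trans _]]] := Hwit hj.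
have nz_y := Omega_e_target_neq0 Hxy; have nz_z := Omega_e_target_neq0 Hyz.
case: Hxy Hyz => [Lx [Ly Cxy]] [_ [Lz Cyz]].
case: Cxy => [[exy [ox oy]] | [[x0 _] | [a [b [La [Lb [ab [ea eb]]]]]]]].
- case: Cyz => [[_ [oy' _]] | [[y0 _] | [a' [b' [La' [Lb' [ab' [ea' eb']]]]]]]].
  + by rewrite oy in oy'.
  + by case: nz_y.
  + by apply: (Omega_e_of_order Lx Lz La' Lb' ab'); rewrite ?ea' ?exy.
- exact: Omega_e_from_initial.
- case: Cyz => [[eyz [oy' oz]] | [[y0 _] | [a' [b' [La' [Lb' [ab' [ea' eb']]]]]]]].
  + by apply: (Omega_e_of_order Lx Lz La Lb ab); rewrite ?eb.
  + by case: nz_y.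
  + have ea'b := write_data_inj Lb La' (etrans eb (esym ea')); subst a'.
    exact: Omega_e_of_order Lx Lz La Lb' (trans _ _ _ ab ab') ea eb'.
Qed.

Lemma Omega_e_split j x y c :
  1 <= j <= m -> Oe j x y -> Lset tau j c -> Oe j x c \/ Oe j c y.
Proof.
move=> hj Hxy Lc; have [_ [_ [trans total]]] := Hwit hj.
have nz_y := Omega_e_target_neq0 Hxy.
case: Hxy => Lx [Ly Cxy].
case: (data_initial_or_written Lc) => [c0 | [a' [La' ea']]].
  by right; apply: Omega_e_from_initial.
have nz_c : dat c <> 0 by rewrite -ea'; apply: write_data_neq0 La'.
case: Cxy => [[exy [ox oy]] | [[x0 _] | [a [b [La [Lb [ab [ea eb]]]]]]]].
- have Wx : Lw tau j x by [].
  case: (PeanoNat.Nat.eq_dec a' x) => [ea'x | ne].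
    subst a'; case oc: (op (at_ tau c)).
      by left; apply: Omega_e_read_from.
    right; rewrite (write_data_inj (conj Lc oc) Wx (esym ea')).
    exact: Omega_e_read_from.
  case: (total a' x La' Wx ne) => H.
  + by right; apply: (Omega_e_of_order Lc Ly La' Wx H).
  + by left; apply: (Omega_e_of_order Lx Lc Wx La' H).
- by left; apply: Omega_e_from_initial.
- case: (PeanoNat.Nat.eq_dec a' a) => [ea'a | ne].
    by right; rewrite ea'a in ea'; apply: (Omega_e_of_order Lc Ly La Lb ab).
  case: (total a' a La' La ne) => H.
  + by right; apply: (Omega_e_of_order Lc Ly La' Lb (trans _ _ _ H ab)).
  + by left; apply: (Omega_e_of_order Lx Lc La La' H).
Qed.

Lemma Omega_e_cross j p q r s :
  1 <= j <= m -> Oe j p q -> Oe j r s -> Oe j p s \/ Oe j r q.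
Proof.
move=> hj Hpq Hrs; case: (Omega_e_split hj Hpq Hrs.1) => [Hpr | Hrq]; last by right.
by left; apply: Omega_e_trans hj Hpr Hrs.
Qed.

Lemma Gedge_irrefl n x : ~ Gedge n m Om tau x x.
Proof.
case=> [[i [_ [_ [_ ]]]] | [j [hj Hxx]]]; first by rewrite ltnn.
exact: Omega_e_irrefl hj Hxx.
Qed.

Section ChordlessCycle.
Variable n : nat.

Local Notation G := (Gedge n m Om tau).
Variables (l : nat) (W : nat -> nat).
Hypothesis Hcyc : periodic_cycle (is_pos tau) G l W.
Hypothesis Hchordless : chordless G l W.

Definition proc_step t := exists i, 1 <= i <= n /\ M tau i (W t) (W t.+1).
Definition loc_step t := exists j, 1 <= j <= m /\ Oe j (W t) (W t.+1).

Lemma W_period t : W (t + l) = W t.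
Proof. by case: Hcyc. Qed.

Lemma W_inj_window b t s :
  b <= t < b + l -> b <= s < b + l -> W t = W s -> t = s.
Proof. by case: Hcyc => _ _ _ W_inj _; apply: W_inj. Qed.

Lemma chordless_length_gt1 : 1 < l.
Proof.
case: Hcyc => l_gt0 _ W_per _ W_E.
case: (ltnP 1 l) => // l_le1.
have l1 : l = 1 by apply/eqP; rewrite eqn_leq l_le1.
by have := W_E 0; rewrite -[1](add0n) -l1 W_per => /Gedge_irrefl.
Qed.

Lemma step_cases t : proc_step t \/ loc_step t.
Proof. by case: Hcyc => _ _ _ _; apply. Qed.

Lemma no_consecutive_proc_steps t : proc_step t -> proc_step t.+1 -> False.
Proof.
move=> [i [hi Mt]] [i' [_ Mt1]].
apply: (Hchordless (a := t) (c := t.+2)) => //; first by have := chordless_length_gt1; lia.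
by left; exists i; split=> //; apply: M_trans Mt Mt1.
Qed.

Lemma no_consecutive_loc_steps t : loc_step t -> loc_step t.+1 -> False.
Proof.
move=> [j [hj Ot]] [j' [_ Ot1]].
have ejj' : j = j' by case: Ot => _ [[_ <-] _]; case: Ot1 => [[_ <-] _].
subst j'; apply: (Hchordless (a := t) (c := t.+2)) => //.
  by have := chordless_length_gt1; lia.
by right; exists j; split; last exact: (Omega_e_trans hj Ot Ot1).
Qed.

Lemma proc_step_next t : proc_step t -> loc_step t.+1.
Proof.
by move=> Pt; case: (step_cases t.+1) => // /(no_consecutive_proc_steps Pt).
Qed.

Lemma loc_step_next t : loc_step t -> proc_step t.+1.
Proof.
by move=> Lt; case: (step_cases t.+1) => // /(no_consecutive_loc_steps Lt).
Qed.

Lemma proc_step_not_loc_step t : proc_step t -> loc_step t -> False.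
Proof.
move=> Pt Lt; case: (step_cases t.+1).
- exact: no_consecutive_proc_steps.
- exact: no_consecutive_loc_steps.
Qed.

Lemma alternating_proc_steps : exists s0, forall x, proc_step (s0 + 2 * x).
Proof.
have [s0 P0] : exists s0, proc_step s0.
  by case: (step_cases 0) => [P0 | /loc_step_next P1]; [exists 0 | exists 1].
exists s0; elim=> [|x IHx]; first by rewrite addn0.
by rewrite mulnS addnCA !add2n; apply/loc_step_next/proc_step_next.
Qed.

Lemma proc_step_shift_period t : proc_step t -> proc_step (t + l).
Proof. by move=> [i [hi Mt]]; exists i; rewrite -addSn !W_period. Qed.

Lemma chordless_length_even s0 :
  (forall x, proc_step (s0 + 2 * x)) -> exists k, l = 2 * k.
Proof.
move=> Halt; exists l./2; have := odd_double_half l.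
case: (odd l) => /= hl; last lia.
exfalso; apply: (@proc_step_not_loc_step (s0 + l)).
  by have := proc_step_shift_period (Halt 0); rewrite muln0 addn0.
have -> : s0 + l = (s0 + 2 * l./2).+1 by lia.
exact/proc_step_next/Halt.
Qed.

Section NiceCycle.
Variables (s0 k : nat).
Hypothesis Halt : forall x, proc_step (s0 + 2 * x).
Hypothesis Hlen : l = 2 * k.

(* u x and w x are the source and target of the x-th program-order edge,
   counting from 1. *)
Definition u x := W (s0 + 2 * x.-1).
Definition w x := W (s0 + 2 * x.-1).+1.

Lemma u_csucc x : 1 <= x <= k -> u (csucc k x) = W (s0 + 2 * x).
Proof.
rewrite /u /csucc => hx; case: ifP => [lt_xk | /negbT]; first by congr W; lia.
by rewrite -ltnNge -(W_period (s0 + 2 * 0)) => ge_xk; congr W; lia.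
Qed.

Lemma nice_proc_edge x : exists i, 1 <= i <= n /\ M tau i (u x) (w x).
Proof. exact: Halt. Qed.

Lemma nice_loc_edge x : 1 <= x <= k ->
  exists j, 1 <= j <= m /\ Oe j (w x) (u (csucc k x)).
Proof.
move=> hx; rewrite u_csucc //.
have -> : s0 + 2 * x = (s0 + 2 * x.-1).+2 by lia.
exact: proc_step_next (Halt _).
Qed.

Lemma nice_procs_distinct x y : 1 <= x -> x < y -> y <= k -> forall i i',
  1 <= i <= n -> M tau i (u x) (w x) -> M tau i' (u y) (w y) -> i <> i'.
Proof.
move=> hx xy yk i i' hi Mx My eii'; subst i'.
case: (M_cross Mx My) => Mchord.
- apply: (Hchordless (a := s0 + 2 * x.-1) (c := (s0 + 2 * y.-1).+1)); [lia | lia |].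
  by left; exists i.
- apply: (Hchordless (a := s0 + 2 * y.-1) (c := (s0 + 2 * x.-1).+1 + l)); [lia | lia |].
  by rewrite W_period; left; exists i.
Qed.

Lemma nice_locs_distinct x y : 1 <= x -> x < y -> y <= k -> forall j j',
  1 <= j <= m -> Oe j (w x) (u (csucc k x)) -> Oe j' (w y) (u (csucc k y)) -> j <> j'.
Proof.
move=> hx xy yk j j' hj Ox Oy ejj'; subst j'.
rewrite u_csucc in Ox; last lia.
rewrite u_csucc in Oy; last lia.
case: (Omega_e_cross hj Ox Oy) => Ochord.
- apply: (Hchordless (a := (s0 + 2 * x.-1).+1) (c := s0 + 2 * y)); [lia | lia |].
  by right; exists j.
- apply: (Hchordless (a := (s0 + 2 * y.-1).+1) (c := s0 + 2 * x + l)); [lia | lia |].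
  by rewrite W_period; right; exists j.
Qed.

Lemma alternating_nice_cycle : nice_cycle n m Om tau k u w.
Proof.
split; [|split; [|split; [|split; [|split; [|split]]]]].
- by move=> x y hx hy /(W_inj_window (b := s0)); lia.
- by move=> x y hx hy /(W_inj_window (b := s0)); lia.
- by move=> x y hx hy /(W_inj_window (b := s0)); lia.
- by case: Hcyc => _ W_pos _ _ _ x _; split; apply: W_pos.
- by move=> x hx; split; [apply: nice_proc_edge | apply: nice_loc_edge].
- by move=> x y hx xy yk i i' hi _; apply: nice_procs_distinct.
- by move=> x y hx xy yk j j' hj _; apply: nice_locs_distinct.
Qed.

End NiceCycle.

Lemma chordless_has_nice_cycle : exists2 k, 1 <= k & has_nice_cycle n m Om tau k.
Proof.
have [s0 Halt] := alternating_proc_steps.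
have [k Hlen] := chordless_length_even Halt.
exists k; first by have := chordless_length_gt1; lia.
by exists (u s0), (w s0); apply: alternating_nice_cycle.
Qed.

End ChordlessCycle.

End WitnessOrder.

Lemma nice_cycle_le_nprocs n m Om tau k u w :
  nice_cycle n m Om tau k u w -> k <= n.
Proof.
move=> [_ [_ [_ [_ [edges [procs_distinct _]]]]]].
apply: (leq_of_inj_in_range (f := fun x => proc (at_ tau (u x)))) => [x hx | x y hx hy e].
  by have [[i [hi [[_ ->] _]]] _] := edges x hx.
have [[i [hi Mx]] _] := edges x hx; have [[i' [hi' My]] _] := edges y hy.
have eii' : i = i' by case: Mx e => [[_ ->] _]; case: My => [[_ ->] _].
case: (ltngtP x y) => // [xy | yx]; exfalso.
- by apply: (procs_distinct x y _ xy _ i i') => //; lia.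
- by apply: (procs_distinct y x _ yx _ i' i) => //; lia.
Qed.

Lemma nice_cycle_le_nlocs n m Om tau k u w :
  nice_cycle n m Om tau k u w -> k <= m.
Proof.
move=> [_ [_ [_ [_ [edges [_ locs_distinct]]]]]].
apply: (leq_of_inj_in_range (f := fun x => loc (at_ tau (w x)))) => [x hx | x y hx hy e].
  by have [_ [j [hj [[_ ->] _]]]] := edges x hx.
have [_ [j [hj Ox]]] := edges x hx; have [_ [j' [hj' Oy]]] := edges y hy.
have ejj' : j = j' by case: Ox e => [[_ ->] _]; case: Oy => [[_ ->] _].
case: (ltngtP x y) => // [xy | yx]; exfalso.
- by apply: (locs_distinct x y _ xy _ j j') => //; lia.
- by apply: (locs_distinct y x _ yx _ j' j) => //; lia.
Qed.

Theorem theorem6p1 (S : memsys) (HC : causality S) (n m v : nat)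
  (hn : 1 <= n) (hm : 1 <= m) (hv : 1 <= v)
  (Om : witness_t) (HOm : is_witness S n m v Om)
  (tau : seq mevent) (Htr : is_trace S n m v tau) (Hun : unambiguous tau)
  (Hcyc : has_cycle n m Om tau) :
  exists k, 1 <= k <= minn n m /\ has_nice_cycle n m Om tau k.
Proof.
have Hcaus := HC n m v hn hm hv tau Htr.
have Hwit := HOm tau Htr.
case: Hcyc => l [f [l_gt0 [f_pos [f_inj f_edge]]]].
have [l' [W [Hpc Hcl]]] :=
  exists_chordless_cycle (periodic_cycle_of_cycle l_gt0 f_pos f_inj f_edge).
have [k k_gt0 [u [w Hnice]]] := chordless_has_nice_cycle Hun Hcaus Hwit Hpc Hcl.
exists k; split; last by exists u, w.
by rewrite leq_min k_gt0 (nice_cycle_le_nprocs Hnice) (nice_cycle_le_nlocs Hnice).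
Qed.
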